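(* Let $ABC$ be a triangle with incenter $I$ and orthocenter $H$, and let $H_A, H_B, H_C$ be the orthocenters of the triangles $BIC$, $CIA$, $AIB$ respectively. The circumcircles of the triangles $AH_BH_C$, $BH_CH_A$, $CH_AH_B$ pass through a common point $X$. Let $O_A, O_B, O_C$ be the circumcenters of these three triangles and let $O_r$ be the circumcenter of triangle $O_AO_BO_C$. Then $X$ lies on the line $O_rH$. *)

From HB Require Import structures.
From mathcomp Require Import all_boot all_order all_algebra.
Set Implicit Arguments. Unset Strict Implicit. Unset Printing Implicit Defensive.
Import Order.TTheory GRing.Theory Num.Theory.
Local Open Scope ring_scope.

Definition point (R : rcfType) := (R * R)%type.

Section Geom.
Variable R : rcfType.
Implicit Types P Q S O X : point R.

Definition psub P Q : point R := (P.1 - Q.1, P.2 - Q.2).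
Definition dot P Q : R := P.1 * Q.1 + P.2 * Q.2.
Definition dist2 P Q : R := dot (psub P Q) (psub P Q).
Definition dist P Q : R := Num.sqrt (dist2 P Q).

Definition collinear P Q S : Prop :=
  (Q.1 - P.1) * (S.2 - P.2) - (Q.2 - P.2) * (S.1 - P.1) = 0.

Definition is_orthocenter Hp P Q S : Prop :=
  dot (psub Hp P) (psub Q S) = 0 /\
  dot (psub Hp Q) (psub S P) = 0 /\
  dot (psub Hp S) (psub P Q) = 0.

Definition is_circumcenter O P Q S : Prop :=
  ~ collinear P Q S /\ dist2 O P = dist2 O Q /\ dist2 O P = dist2 O S.

Definition on_circle X O P : Prop := dist2 O X = dist2 O P.

Definition incenter (A B C : point R) : point R :=
  let a := dist B C in let b := dist C A in let c := dist A B in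
  ((a * A.1 + b * B.1 + c * C.1) / (a + b + c),
   (a * A.2 + b * B.2 + c * C.2) / (a + b + c)).
End Geom.

From mathcomp Require Import all_boot all_order all_algebra.
From mathcomp Require Import ring lra.
Set Implicit Arguments. Unset Strict Implicit. Unset Printing Implicit Defensive.
Import Order.TTheory GRing.Theory Num.Theory.
Local Open Scope ring_scope.

(* The configuration is invariant under rigid motions, so we may take B = (0, 0)
   and C on the positive x-axis.  A triangle is then described by the tangent
   lengths x, y from B and C and the signed inradius r: the incircle touches BC
   at (x, 0), I = (x, r), and A is a rational function of x, y, r.  Every
   orthocenter and circumcenter of the configuration, and the common point X of
   the three circles, is the unique solution of a 2x2 linear system, hence an
   explicit rational function of x, y, r; the collinearity of X, O_r and H is
   then a rational identity. *)

Section PlaneGeometry.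
Variable R : rcfType.
Implicit Types (P Q S U V O X : point R) (a : R).

Definition cross U V : R := U.1 * V.2 - U.2 * V.1.

Lemma dotC U V : dot U V = dot V U.
Proof. by rewrite /dot mulrC [U.2 * _]mulrC. Qed.

Lemma dist2_ge0 P Q : 0 <= dist2 P Q.
Proof. by rewrite /dist2 /dot -!expr2 addr_ge0 ?sqr_ge0. Qed.

Lemma dist2_eq0 P Q : (dist2 P Q == 0) = (P == Q).
Proof.
case: P Q => [p1 p2] [q1 q2]; rewrite /dist2 /dot /psub /= -!expr2.
by rewrite paddr_eq0 ?sqr_ge0 // !sqrf_eq0 !subr_eq0 xpair_eqE.
Qed.

Lemma sqr_dist P Q : dist P Q ^+ 2 = dist2 P Q.
Proof. by rewrite /dist sqr_sqrtr ?dist2_ge0. Qed.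

Lemma dist_ge0 P Q : 0 <= dist P Q.
Proof. exact: sqrtr_ge0. Qed.

Lemma dist_gt0 P Q : P != Q -> 0 < dist P Q.
Proof. by rewrite /dist sqrtr_gt0 lt_def dist2_eq0 dist2_ge0 andbT. Qed.

Lemma eq_of_orthogonal P Q U V :
  dot (psub P Q) U = 0 -> dot (psub P Q) V = 0 -> cross U V != 0 -> P = Q.
Proof.
case: P Q => [p1 p2] [q1 q2] DU DV UV.
have /eqP : (p1 - q1) * cross U V = 0.
  have -> : (p1 - q1) * cross U V = dot (psub (p1, p2) (q1, q2)) U * V.2
                                   - dot (psub (p1, p2) (q1, q2)) V * U.2.
    by rewrite /dot /cross /=; ring.
  by rewrite DU DV; ring.
have /eqP : (p2 - q2) * cross U V = 0.
  have -> : (p2 - q2) * cross U V = dot (psub (p1, p2) (q1, q2)) V * U.1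
                                   - dot (psub (p1, p2) (q1, q2)) U * V.1.
    by rewrite /dot /cross /=; ring.
  by rewrite DU DV; ring.
by rewrite !mulf_eq0 (negbTE UV) !orbF !subr_eq0 => /eqP-> /eqP->.
Qed.

Lemma equidistant_orthogonal P Q X Y :
  dist2 X P = dist2 X Q -> dist2 Y P = dist2 Y Q -> dot (psub Y X) (psub P Q) = 0.
Proof.
move=> eX eY; have /eqP : 2 * dot (psub Y X) (psub P Q) = 0.
  have -> : 2 * dot (psub Y X) (psub P Q)
            = (dist2 X P - dist2 X Q) - (dist2 Y P - dist2 Y Q).
    by rewrite /dist2 /dot /psub /=; ring.
  by rewrite eX eY !subrr.
by rewrite mulf_eq0 pnatr_eq0 => /eqP.
Qed.

Lemma orthocenter_unique H1 H2 P Q S : ~ collinear P Q S ->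
  is_orthocenter H1 P Q S -> is_orthocenter H2 P Q S -> H1 = H2.
Proof.
move=> PQS [h1P [h1Q _]] [h2P [h2Q _]].
apply: (eq_of_orthogonal (U := psub Q S) (V := psub S P)).
- transitivity (dot (psub H1 P) (psub Q S) - dot (psub H2 P) (psub Q S)).
    by rewrite /dot /psub /=; ring.
  by rewrite h1P h2P subrr.
- transitivity (dot (psub H1 Q) (psub S P) - dot (psub H2 Q) (psub S P)).
    by rewrite /dot /psub /=; ring.
  by rewrite h1Q h2Q subrr.
- by apply/eqP => h; apply: PQS; rewrite /collinear -[RHS]h /cross /psub /=; ring.
Qed.

Lemma circumcenter_unique O1 O2 P Q S : is_circumcenter O1 P Q S ->
  dist2 O2 P = dist2 O2 Q -> dist2 O2 P = dist2 O2 S -> O1 = O2.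
Proof.
move=> [PQS [e1Q e1S]] e2Q e2S.
apply: (eq_of_orthogonal (U := psub P Q) (V := psub P S)).
- exact: equidistant_orthogonal.
- exact: equidistant_orthogonal.
- by apply/eqP => h; apply: PQS; rewrite /collinear -[RHS]h /cross /psub /=; ring.
Qed.

Lemma common_point_unique O1 O2 O3 P1 P2 P3 X1 X2 : ~ collinear O1 O2 O3 ->
  on_circle X1 O1 P1 -> on_circle X1 O2 P2 -> on_circle X1 O3 P3 ->
  on_circle X2 O1 P1 -> on_circle X2 O2 P2 -> on_circle X2 O3 P3 -> X1 = X2.
Proof.
rewrite /on_circle => O123 e11 e12 e13 e21 e22 e23.
have e1 : dist2 O1 X1 = dist2 O1 X2 by rewrite e11 e21.
have e2 : dist2 O2 X1 = dist2 O2 X2 by rewrite e12 e22.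
have e3 : dist2 O3 X1 = dist2 O3 X2 by rewrite e13 e23.
apply: (eq_of_orthogonal (U := psub O2 O1) (V := psub O3 O1)).
- by rewrite dotC; apply: equidistant_orthogonal.
- by rewrite dotC; apply: equidistant_orthogonal.
- exact/eqP.
Qed.

Lemma noncollinear_of_cross P Q S k :
  cross (psub Q P) (psub S P) = k -> k != 0 -> ~ collinear P Q S.
Proof. by move=> <- /eqP. Qed.

Section Motion.
Variables (T : point R) (e1 e2 : R).
Hypothesis unit_e : e1 ^+ 2 + e2 ^+ 2 = 1.

Definition motion P : point R :=
  ((P.1 - T.1) * e1 + (P.2 - T.2) * e2, (P.2 - T.2) * e1 - (P.1 - T.1) * e2).

Definition motion_inv P : point R :=
  (T.1 + P.1 * e1 - P.2 * e2, T.2 + P.1 * e2 + P.2 * e1).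

Lemma motion_invK : cancel motion_inv motion.
Proof.
case=> p1 p2; rewrite /motion /motion_inv /=.
by congr pair; rewrite -[RHS]mulr1 -unit_e; ring.
Qed.

Lemma dot_motion P Q S U :
  dot (psub (motion P) (motion Q)) (psub (motion S) (motion U)) = dot (psub P Q) (psub S U).
Proof. by rewrite -[RHS]mul1r -unit_e /dot /psub /motion /=; ring. Qed.

Lemma collinear_motion P Q S : collinear (motion P) (motion Q) (motion S) <-> collinear P Q S.
Proof.
change (cross (psub (motion Q) (motion P)) (psub (motion S) (motion P)) = 0
        <-> cross (psub Q P) (psub S P) = 0).
suff -> : cross (psub (motion Q) (motion P)) (psub (motion S) (motion P))
          = cross (psub Q P) (psub S P) by [].
by rewrite -[RHS]mul1r -unit_e /cross /psub /motion /=; ring.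
Qed.

Lemma dist2_motion P Q : dist2 (motion P) (motion Q) = dist2 P Q.
Proof. exact: dot_motion. Qed.

Lemma orthocenter_motion H P Q S :
  is_orthocenter (motion H) (motion P) (motion Q) (motion S) <-> is_orthocenter H P Q S.
Proof. by rewrite /is_orthocenter !dot_motion. Qed.

Lemma circumcenter_motion O P Q S :
  is_circumcenter (motion O) (motion P) (motion Q) (motion S) <-> is_circumcenter O P Q S.
Proof. by rewrite /is_circumcenter !dist2_motion collinear_motion. Qed.

Lemma on_circle_motion X O P : on_circle (motion X) (motion O) (motion P) <-> on_circle X O P.
Proof. by rewrite /on_circle !dist2_motion. Qed.

Lemma incenter_motion A B C : B != C ->
  motion (incenter A B C) = incenter (motion A) (motion B) (motion C).
Proof.
move=> BC; rewrite /incenter /dist !dist2_motion.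
have : 0 < dist B C + dist C A + dist A B.
  by rewrite -addrA ltr_wpDr ?addr_ge0 ?dist_ge0 ?dist_gt0.
rewrite /dist => /lt0r_neq0 abc.
by rewrite /motion /=; congr pair; field.
Qed.
End Motion.

Lemma normalizing_motion B C : B != C -> exists e1 e2 : R,
  [/\ e1 ^+ 2 + e2 ^+ 2 = 1, motion B e1 e2 B = (0, 0) & motion B e1 e2 C = (dist B C, 0)].
Proof.
move=> BC; set a := dist B C.
have a0 : a != 0 by rewrite gt_eqF ?dist_gt0.
have aBC : a ^+ 2 = (B.1 - C.1) * (B.1 - C.1) + (B.2 - C.2) * (B.2 - C.2).
  exact: sqr_dist.
exists ((C.1 - B.1) / a), ((C.2 - B.2) / a); split.
- by apply: (mulIf (expf_neq0 2 a0)); rewrite mul1r {2}aBC; field.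
- by rewrite /motion; congr pair; ring.
- rewrite /motion /=; congr pair; last by ring.
  by apply: (mulIf a0); rewrite -[a * a]expr2 aBC; field.
Qed.

Section TangentLengthFrame.
Variables x y r : R.
Hypotheses (x_gt0 : 0 < x) (y_gt0 : 0 < y) (r_neq0 : r != 0) (d_gt0 : 0 < x * y - r ^+ 2).

Definition A0 : point R :=
  (y * (x ^+ 2 - r ^+ 2) / (x * y - r ^+ 2), 2 * x * y * r / (x * y - r ^+ 2)).
Definition C0 : point R := (x + y, 0).
Definition I0 : point R := (x, r).
Definition H0 : point R :=
  (y * (x ^+ 2 - r ^+ 2) / (x * y - r ^+ 2),
   (x ^+ 2 - r ^+ 2) * (y ^+ 2 - r ^+ 2) / (2 * r * (x * y - r ^+ 2))).
Definition HA0 : point R := (x, x * y / r).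
Definition HB0 : point R :=
  ((x ^+ 2 * y - x * r ^+ 2 - 2 * y * r ^+ 2) / (x * y - r ^+ 2),
   r * (x * y - y ^+ 2) / (x * y - r ^+ 2)).
Definition HC0 : point R :=
  ((x ^+ 2 * y + x * r ^+ 2) / (x * y - r ^+ 2), r * (x * y - x ^+ 2) / (x * y - r ^+ 2)).
Definition OA0 : point R :=
  ((3 * x ^+ 2 * y - x * y ^+ 2 - x * r ^+ 2 - y * r ^+ 2) / (2 * (x * y - r ^+ 2)),
   r * (- x ^+ 2 + 4 * x * y - y ^+ 2 - 2 * r ^+ 2) / (2 * (x * y - r ^+ 2))).
Definition OB0 : point R :=
  ((2 * x ^+ 2 * y - x * y ^+ 2 - x * r ^+ 2 + 2 * y * r ^+ 2) / (2 * (x * y - r ^+ 2)),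
   (x ^+ 2 * y ^+ 2 - x ^+ 2 * r ^+ 2 - 2 * r ^+ 4) / (2 * r * (x * y - r ^+ 2))).
Definition OC0 : point R :=
  ((3 * x ^+ 2 * y - 4 * x * r ^+ 2 - y * r ^+ 2) / (2 * (x * y - r ^+ 2)),
   (x ^+ 2 * y ^+ 2 - y ^+ 2 * r ^+ 2 - 2 * r ^+ 4) / (2 * r * (x * y - r ^+ 2))).
Definition Or0 : point R :=
  ((3 * x - y) / 2,
   (x ^+ 2 * y ^+ 2 - x ^+ 2 * r ^+ 2 + 4 * x * y * r ^+ 2 - y ^+ 2 * r ^+ 2 - 7 * r ^+ 4)
     / (4 * r * (x * y - r ^+ 2))).

(* Q0 vanishes exactly for the equilateral triangle (x = y, x y = 3 r^2), where
   O_A, O_B, O_C are collinear. *)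
Definition Q0 : R := (x * y - 3 * r ^+ 2) ^+ 2 + (r * (x - y)) ^+ 2.

Definition X0 : point R :=
  ((2 * x ^+ 4 * y ^+ 3 + 2 * r ^+ 2 * x ^+ 4 * y - x ^+ 3 * y ^+ 4 - 16 * r ^+ 2 * x ^+ 3 * y ^+ 2
    - 3 * r ^+ 4 * x ^+ 3 + 8 * r ^+ 2 * x ^+ 2 * y ^+ 3 + 28 * r ^+ 4 * x ^+ 2 * y
    - r ^+ 2 * x * y ^+ 4 - 12 * r ^+ 4 * x * y ^+ 2 - 15 * r ^+ 6 * x + 2 * r ^+ 4 * y ^+ 3
    + 6 * r ^+ 6 * y) / ((x * y - r ^+ 2) * Q0),
   r ^+ 3 * (4 * x ^+ 3 * y - 10 * x ^+ 2 * y ^+ 2 + 4 * x * y ^+ 3 - 6 * r ^+ 2 * x ^+ 2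
    + 24 * r ^+ 2 * x * y - 6 * r ^+ 2 * y ^+ 2 - 18 * r ^+ 4) / ((x * y - r ^+ 2) * Q0)).

Let d_neq0 : x * y - r ^+ 2 != 0 := lt0r_neq0 d_gt0.
Let x_neq0 : x != 0 := lt0r_neq0 x_gt0.
Let y_neq0 : y != 0 := lt0r_neq0 y_gt0.
Let two_neq0 : (2 : R) != 0. Proof. by rewrite pnatr_eq0. Qed.
Let xy_neq0 : x + y != 0 := lt0r_neq0 (addr_gt0 x_gt0 y_gt0).

Lemma sqr_add_sqr_neq0 (u : R) : u ^+ 2 + r ^+ 2 != 0.
Proof. by rewrite lt0r_neq0 // ltr_wpDl ?sqr_ge0 // exprn_even_gt0. Qed.

Lemma noncollinear_ABC : ~ collinear A0 (0, 0) C0.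
Proof.
apply: (noncollinear_of_cross (k := 2 * x * y * r * (x + y) / (x * y - r ^+ 2))).
  by rewrite /cross /psub /A0 /C0 /=; field.
by rewrite !mulf_neq0 ?invr_neq0.
Qed.

Lemma noncollinear_BIC : ~ collinear (0, 0) I0 C0.
Proof.
apply: (noncollinear_of_cross (k := - (r * (x + y)))).
  by rewrite /cross /psub /I0 /C0 /=; ring.
by rewrite oppr_eq0 mulf_neq0.
Qed.

Lemma noncollinear_CIA : ~ collinear C0 I0 A0.
Proof.
apply: (noncollinear_of_cross (k := - (x * r * (y ^+ 2 + r ^+ 2) / (x * y - r ^+ 2)))).
  by rewrite /cross /psub /C0 /I0 /A0 /=; field.
by rewrite oppr_eq0 !mulf_neq0 ?invr_neq0 ?sqr_add_sqr_neq0.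
Qed.

Lemma noncollinear_AIB : ~ collinear A0 I0 (0, 0).
Proof.
apply: (noncollinear_of_cross (k := - (y * r * (x ^+ 2 + r ^+ 2) / (x * y - r ^+ 2)))).
  by rewrite /cross /psub /A0 /I0 /=; field.
by rewrite oppr_eq0 !mulf_neq0 ?invr_neq0 ?sqr_add_sqr_neq0.
Qed.

Lemma orthocenter_ABC H : is_orthocenter H A0 (0, 0) C0 -> H = H0.
Proof.
move/orthocenter_unique; apply; first exact: noncollinear_ABC.
rewrite /is_orthocenter /dot /psub /H0 /A0 /C0 /=.
by split; [|split]; field; rewrite ?d_neq0 ?r_neq0.
Qed.

Lemma orthocenter_BIC H : is_orthocenter H (0, 0) I0 C0 -> H = HA0.
Proof.
move/orthocenter_unique; apply; first exact: noncollinear_BIC.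
rewrite /is_orthocenter /dot /psub /HA0 /I0 /C0 /=.
by split; [|split]; field; rewrite ?d_neq0 ?r_neq0.
Qed.

Lemma orthocenter_CIA H : is_orthocenter H C0 I0 A0 -> H = HB0.
Proof.
move/orthocenter_unique; apply; first exact: noncollinear_CIA.
rewrite /is_orthocenter /dot /psub /HB0 /C0 /I0 /A0 /=.
by split; [|split]; field; rewrite ?d_neq0 ?r_neq0.
Qed.

Lemma orthocenter_AIB H : is_orthocenter H A0 I0 (0, 0) -> H = HC0.
Proof.
move/orthocenter_unique; apply; first exact: noncollinear_AIB.
rewrite /is_orthocenter /dot /psub /HC0 /A0 /I0 /=.
by split; [|split]; field; rewrite ?d_neq0 ?r_neq0.
Qed.

Lemma circumcenter_AHBHC O : is_circumcenter O A0 HB0 HC0 -> O = OA0.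
Proof.
move/circumcenter_unique; apply; rewrite /dist2 /dot /psub /OA0 /A0 /HB0 /HC0 /=;
  by field; rewrite ?d_neq0 ?r_neq0.
Qed.

Lemma circumcenter_BHCHA O : is_circumcenter O (0, 0) HC0 HA0 -> O = OB0.
Proof.
move/circumcenter_unique; apply; rewrite /dist2 /dot /psub /OB0 /HC0 /HA0 /=;
  by field; rewrite ?d_neq0 ?r_neq0.
Qed.

Lemma circumcenter_CHAHB O : is_circumcenter O C0 HA0 HB0 -> O = OC0.
Proof.
move/circumcenter_unique; apply; rewrite /dist2 /dot /psub /OC0 /C0 /HA0 /HB0 /=;
  by field; rewrite ?d_neq0 ?r_neq0.
Qed.

Lemma circumcenter_OAOBOC O : is_circumcenter O OA0 OB0 OC0 -> O = Or0.
Proof.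
move/circumcenter_unique; apply; rewrite /dist2 /dot /psub /Or0 /OA0 /OB0 /OC0 /=;
  by field; rewrite ?d_neq0 ?r_neq0.
Qed.

Lemma Q0_neq0 : ~ collinear OA0 OB0 OC0 -> Q0 != 0.
Proof.
move=> OABC; apply/eqP => Q0_eq0; apply: OABC.
rewrite /collinear; transitivity (- (x * y * (x + y) * Q0) / (4 * r * (x * y - r ^+ 2) ^+ 2)).
  by rewrite /OA0 /OB0 /OC0 /Q0 /=; field; rewrite ?d_neq0 ?r_neq0.
by rewrite Q0_eq0 mulr0 oppr0 mul0r.
Qed.

Lemma X0_on_circles : Q0 != 0 ->
  [/\ on_circle X0 OA0 A0, on_circle X0 OB0 (0, 0) & on_circle X0 OC0 C0].
Proof.
move=> Q0nz; rewrite /on_circle /dist2 /dot /psub /X0 /OA0 /OB0 /OC0 /A0 /C0 /Q0 /=.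
by split; field; rewrite ?d_neq0 ?r_neq0 ?Q0nz.
Qed.

Lemma collinear_X0_Or0_H0 : Q0 != 0 -> collinear X0 Or0 H0.
Proof.
move=> Q0nz; rewrite /collinear /X0 /Or0 /H0 /Q0 /=.
by field; rewrite ?d_neq0 ?r_neq0 ?Q0nz.
Qed.

Lemma proposition5p6_tangent_frame A B C I H HA HB HC OA OB OC Or :
  A = A0 -> B = (0, 0) -> C = C0 -> I = I0 ->
  is_orthocenter H A B C ->
  is_orthocenter HA B I C -> is_orthocenter HB C I A -> is_orthocenter HC A I B ->
  is_circumcenter OA A HB HC -> is_circumcenter OB B HC HA -> is_circumcenter OC C HA HB ->
  is_circumcenter Or OA OB OC ->
  (exists X, on_circle X OA A /\ on_circle X OB B /\ on_circle X OC C) /\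
  (forall X, on_circle X OA A -> on_circle X OB B -> on_circle X OC C -> collinear X Or H).
Proof.
move=> -> -> -> -> /orthocenter_ABC-> /orthocenter_BIC-> /orthocenter_CIA-> /orthocenter_AIB->.
move=> /circumcenter_AHBHC-> /circumcenter_BHCHA-> /circumcenter_CHAHB-> hOr.
have OABC : ~ collinear OA0 OB0 OC0 := hOr.1.
have Q0nz := Q0_neq0 OABC.
have [XA XB XC] := X0_on_circles Q0nz.
rewrite (circumcenter_OAOBOC hOr); split=> [|X YA YB YC]; first by exists X0.
by rewrite (common_point_unique OABC YA YB YC XA XB XC); apply: collinear_X0_Or0_H0.
Qed.

Lemma A0_of_tangent_lengths z p q :
  z * (x * y - r ^+ 2) = r ^+ 2 * (x + y) ->
  (x + y) * p = x ^+ 2 + x * y + x * z - y * z -> 2 * r * (x + y + z) = (x + y) * q ->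
  (p, q) = A0.
Proof.
move=> ez ep eq.
have {}ez : z = r ^+ 2 * (x + y) / (x * y - r ^+ 2).
  by apply: (mulIf d_neq0); rewrite ez; field.
have {}ep : p = (x ^+ 2 + x * y + x * z - y * z) / (x + y).
  by apply: (mulfI xy_neq0); rewrite ep; field.
have {}eq : q = 2 * r * (x + y + z) / (x + y).
  by apply: (mulfI xy_neq0); rewrite -eq; field.
by rewrite ep eq ez /A0; congr pair; field; rewrite ?d_neq0 ?xy_neq0.
Qed.
End TangentLengthFrame.

Lemma tangent_lengths (a b c p q : R) : 0 < a -> q != 0 -> 0 <= b -> 0 <= c ->
  b ^+ 2 = (a - p) ^+ 2 + q ^+ 2 -> c ^+ 2 = p ^+ 2 + q ^+ 2 ->
  exists x y z, [/\ 0 < x, 0 < y & 0 < z] /\ [/\ a = x + y, b = y + z & c = x + z].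
Proof.
move=> a_gt0 q_neq0 b_ge0 c_ge0 b2 c2.
have q2_gt0 : 0 < q ^+ 2 by rewrite exprn_even_gt0.
have p_lt : `|p| < c.
  by rewrite -(ltr_pXn2r (n := 2)) ?nnegrE ?normr_ge0 // real_normK ?num_real // c2 ltrDl.
have ap_lt : `|a - p| < b.
  by rewrite -(ltr_pXn2r (n := 2)) ?nnegrE ?normr_ge0 // real_normK ?num_real // b2 ltrDl.
have b_lt : b < a + c.
  have : b ^+ 2 < (a + c) ^+ 2 by rewrite b2; move: p_lt; rewrite ltr_norml; nra.
  by rewrite ltr_pXn2r ?nnegrE ?addr_ge0 // ltW.
have c_lt : c < a + b.
  have : c ^+ 2 < (a + b) ^+ 2 by rewrite c2; move: ap_lt; rewrite ltr_norml; nra.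
  by rewrite ltr_pXn2r ?nnegrE ?addr_ge0 // ltW.
have a_lt : a < b + c by move: p_lt ap_lt; rewrite !ltr_norml; lra.
exists ((a + c - b) / 2), ((a + b - c) / 2), ((b + c - a) / 2).
by split; split; lra.
Qed.

Lemma tangent_projection (x y z p q : R) :
  (x + z) ^+ 2 = p ^+ 2 + q ^+ 2 -> (y + z) ^+ 2 = (x + y - p) ^+ 2 + q ^+ 2 ->
  (x + y) * p = x ^+ 2 + x * y + x * z - y * z.
Proof. by move=> c2 b2; lra. Qed.

Lemma tangent_heron (x y z p q : R) :
  (x + z) ^+ 2 = p ^+ 2 + q ^+ 2 -> (y + z) ^+ 2 = (x + y - p) ^+ 2 + q ^+ 2 ->
  ((x + y) * q) ^+ 2 = 4 * x * y * z * (x + y + z).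
Proof.
move=> c2 b2; have proj := tangent_projection c2 b2.
have -> : ((x + y) * q) ^+ 2 = (x + y) ^+ 2 * (x + z) ^+ 2 - ((x + y) * p) ^+ 2.
  by rewrite c2; ring.
by rewrite proj; ring.
Qed.

Lemma tangent_length_frame (A : point R) a : 0 < a -> ~ collinear A (0, 0) (a, 0) ->
  exists x y r : R, [/\ 0 < x, 0 < y, r != 0 & 0 < x * y - r ^+ 2] /\
    [/\ A = A0 x y r, (a, 0) = C0 x y & incenter A (0, 0) (a, 0) = I0 x r].
Proof.
case: A => p q a_gt0 ABC.
have q_neq0 : q != 0 by apply/eqP => q0; apply: ABC; rewrite /collinear q0 /=; ring.
have BC : dist (0, 0) (a, 0) = a.
  by rewrite /dist /dist2 /dot /psub /= !sub0r mulrNN oppr0 mulr0 addr0 sqrtr_sqr gtr0_norm.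
have b2 : dist (a, 0) (p, q) ^+ 2 = (a - p) ^+ 2 + q ^+ 2.
  by rewrite sqr_dist /dist2 /dot /psub /=; ring.
have c2 : dist (p, q) (0, 0) ^+ 2 = p ^+ 2 + q ^+ 2.
  by rewrite sqr_dist /dist2 /dot /psub /=; ring.
have [x [y [z [[x_gt0 y_gt0 z_gt0] [ea eb ec]]]]] :=
  tangent_lengths a_gt0 q_neq0 (dist_ge0 _ _) (dist_ge0 _ _) b2 c2.
rewrite /incenter BC eb ec; rewrite eb in b2; rewrite ec in c2; subst a.
have proj := tangent_projection c2 b2.
have s_neq0 : x + y + z != 0 by rewrite lt0r_neq0 // !addr_gt0.
have xy_neq0 : x + y != 0 by rewrite lt0r_neq0 // addr_gt0.
(* the signed inradius: twice the signed area over the perimeter *)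
pose r := (x + y) * q / (2 * (x + y + z)).
have er : 2 * r * (x + y + z) = (x + y) * q by rewrite /r; field; rewrite s_neq0.
have r2 : r ^+ 2 * (x + y + z) = x * y * z.
  apply: (mulfI (_ : 4 * (x + y + z) != 0)); first by rewrite mulf_neq0 ?pnatr_eq0.
  transitivity ((2 * r * (x + y + z)) ^+ 2); first by ring.
  by rewrite er (tangent_heron c2 b2); ring.
have ez : z * (x * y - r ^+ 2) = r ^+ 2 * (x + y) by lra.
have r_neq0 : r != 0 by rewrite /r !(mulf_neq0, invr_neq0) ?pnatr_eq0.
have d_gt0 : 0 < x * y - r ^+ 2.
  by rewrite -(pmulr_rgt0 _ z_gt0) ez mulr_gt0 ?exprn_even_gt0 ?addr_gt0.
exists x, y, r; split=> //; split=> //.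
- exact: A0_of_tangent_lengths ez proj er.
- rewrite proj /I0 /= (_ : x + y + _ + _ = 2 * (x + y + z)); last by ring.
  by congr pair; rewrite /r; field.
Qed.
End PlaneGeometry.

Theorem proposition5p6 (R : rcfType) (A B C H HA HB HC OA OB OC Or : point R) :
  ~ collinear A B C ->
  is_orthocenter H A B C ->
  is_orthocenter HA B (incenter A B C) C ->
  is_orthocenter HB C (incenter A B C) A ->
  is_orthocenter HC A (incenter A B C) B ->
  is_circumcenter OA A HB HC ->
  is_circumcenter OB B HC HA ->
  is_circumcenter OC C HA HB ->
  is_circumcenter Or OA OB OC ->
  (exists X : point R, on_circle X OA A /\ on_circle X OB B /\ on_circle X OC C) /\
  (forall X : point R,
     on_circle X OA A -> on_circle X OB B -> on_circle X OC C ->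
     collinear X Or H).
Proof.
move=> ABC hH hHA hHB hHC hOA hOB hOC hOr.
have BC : B != C by apply/eqP => eBC; apply: ABC; rewrite /collinear eBC; ring.
have [e1 [e2 [e mB mC]]] := normalizing_motion BC.
have mABC : ~ collinear (motion B e1 e2 A) (0, 0) (dist B C, 0).
  by rewrite -mB -mC => /(collinear_motion B e).
have [x [y [r [[x_gt0 y_gt0 r_neq0 d_gt0] [mA eC eI]]]]] :=
  tangent_length_frame (dist_gt0 BC) mABC.
have mI : motion B e1 e2 (incenter A B C) = I0 x r.
  by rewrite incenter_motion // mB mC eI.
move: hH hHA hHB hHC => /(orthocenter_motion B e) hH /(orthocenter_motion B e) hHA
  /(orthocenter_motion B e) hHB /(orthocenter_motion B e) hHC.
move: hOA hOB hOC hOr => /(circumcenter_motion B e) hOA /(circumcenter_motion B e) hOB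
  /(circumcenter_motion B e) hOC /(circumcenter_motion B e) hOr.
have [[X' [XA [XB XC]]] common] := proposition5p6_tangent_frame x_gt0 y_gt0 r_neq0 d_gt0
  mA mB (etrans mC eC) mI hH hHA hHB hHC hOA hOB hOC hOr.
split=> [|X YA YB YC].
  exists (motion_inv B e1 e2 X').
  by split; [|split]; apply/(on_circle_motion B e); rewrite (motion_invK B e).
by apply/(collinear_motion B e)/common; apply/(on_circle_motion B e).
Qed.
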